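(* Let $P$ be a finite poset and $\mathcal{F}\subseteq\mathrm{Hom}(P,\mathbb{N})$ a poset filter. The family of ascents $\{\Lambda\phi:\phi\in\mathcal{F}\}$ has a finite set of inclusion-minimal elements.
   Context: $\mathbb{N}=\{0,1,2,\dots\}$; $\mathrm{Hom}(P,\mathbb{N})$ is the set of isotone maps $P\to\mathbb{N}$ ordered pointwise; a filter is an up-closed subset. The ascent of $\phi$ is $\Lambda\phi=\{(p,i)\in P\times\mathbb{N}:\phi(q)\le i<\phi(p)\text{ for all }q<p\}$. *)

From mathcomp Require Import all_boot all_order.
Set Implicit Arguments. Unset Strict Implicit. Unset Printing Implicit Defensive.
Import Order.TTheory.

Section Ascent.
Context {disp : Order.disp_t} {P : finPOrderType disp}.

Definition isotone (phi : P -> nat) : Prop :=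
  forall p q : P, (p <= q)%O -> (phi p <= phi q)%N.

Definition hom_filter (F : (P -> nat) -> Prop) : Prop :=
  (forall phi, F phi -> isotone phi) /\
  (forall phi psi, F phi -> isotone psi ->
     (forall p, (phi p <= psi p)%N) -> F psi).

Definition ascent (phi : P -> nat) : pred (P * nat) :=
  fun x => [forall q : P, (q < x.1)%O ==> (phi q <= x.2)%N] && (x.2 < phi x.1)%N.

Definition min_ascent (F : (P -> nat) -> Prop) (A : pred (P * nat)) : Prop :=
  (exists2 phi, F phi & A =i ascent phi) /\
  (forall psi, F psi -> {subset ascent psi <= A} -> {subset A <= ascent psi}).

End Ascent.

(* By Dickson's lemma the up-closure of F in N^P has a finite basis, so there
   is a bound M such that every phi in F lies above some element of F with all
   values at most M.  Then psi := min(phi, M) is again in F, and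
   Lambda psi is contained in Lambda phi: a pair (p, i) of Lambda psi has
   i < M, and truncation at M changes no value that is at most i.  Hence a
   minimal ascent Lambda phi equals Lambda psi for some psi with values in
   [0, M], and there are finitely many such psi. *)

From Stdlib Require List.
From Stdlib Require Import Classical.
From mathcomp Require Import all_boot all_order.

Set Implicit Arguments.
Unset Strict Implicit.
Unset Printing Implicit Defensive.

Lemma In_of_mem (T : eqType) (x : T) (s : seq T) : x \in s -> List.In x s.
Proof. by elim: s => //= y s IH; rewrite inE => /orP[/eqP ->|/IH]; [left|right]. Qed.

Lemma uniform_bound (A : Type) (Q : A -> nat -> Prop) (L : list A) :
  (forall a v w, Q a v -> v <= w -> Q a w) ->
  (forall a, List.In a L -> exists v, Q a v) ->
  exists V, forall a, List.In a L -> Q a V.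
Proof.
move=> Qmono; elim: L => [|a L IH] QL; first by exists 0.
have [V QV] := IH (fun b Lb => QL b (or_intror Lb)).
have [v Qv] := QL a (or_introl erefl).
exists (maxn V v) => b [<-|Lb]; first exact: Qmono Qv (leq_maxr _ _).
exact: Qmono (QV b Lb) (leq_maxl _ _).
Qed.

Section Dickson.

Variable T : eqType.
Implicit Types (s : seq T) (t : T) (f g x : T -> nat) (U G : (T -> nat) -> Prop).

Definition le_on s f g := forall t, t \in s -> f t <= g t.

Definition upclosed_on s U := forall f g, U f -> le_on s f g -> U g.

Definition upd f t v := fun u => if u == t then v else f u.

Definition basis_for s U G (L : list (T -> nat)) :=
  (forall x, List.In x L -> U x) /\
  (forall f, G f -> exists2 x, List.In x L & le_on s x f).

Lemma upd_self f t : upd f t (f t) =1 f.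
Proof. by move=> u; rewrite /upd; case: eqP => [->|]. Qed.

Lemma le_on_upd s t f g v w :
  le_on s f g -> v <= w -> le_on (t :: s) (upd f t v) (upd g t w).
Proof. by move=> fg vw u; rewrite inE /upd; case: eqP => //= _ /fg. Qed.

Lemma le_on_upd_self s t f : le_on s f (upd f t (f t)).
Proof. by move=> u _; rewrite upd_self. Qed.

Lemma basis_for_sub s U G G' L :
  (forall f, G' f -> G f) -> basis_for s U G L -> basis_for s U G' L.
Proof. by move=> G'G [LU LG]; split=> // f /G'G /LG. Qed.

Lemma basis_for_cat s U G1 G2 L1 L2 :
  basis_for s U G1 L1 -> basis_for s U G2 L2 ->
  basis_for s U (fun f => G1 f \/ G2 f) (L1 ++ L2).
Proof.
move=> [L1U L1G] [L2U L2G]; split.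
  by move=> x /List.in_app_iff[/L1U|/L2U].
move=> f [/L1G[x L1x xf]|/L2G[x L2x xf]]; exists x => //.
  by apply/List.in_app_iff; left.
by apply/List.in_app_iff; right.
Qed.

Lemma basis_for_upd s t W U G L :
  basis_for s (fun x => U (upd x t W)) G L ->
  basis_for (t :: s) U (fun f => G f /\ W <= f t)
    (List.map (fun x => upd x t W) L).
Proof.
move=> [LU LG]; split; first by move=> _ /List.in_map_iff[x [<- /LU]].
move=> f [/LG[x Lx xf] Wf]; exists (upd x t W); first exact: List.in_map.
by move=> u /(le_on_upd (t := t) xf Wf); rewrite upd_self.
Qed.

(* The induction on [s] removes the head coordinate [t]: the elements whose
   [t]-value is at least a suitable [V] are handled by a basis of the
   projection of [U], the finitely many slices [f t = W < V] by bases of the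
   slices. *)
Lemma dickson s U : upclosed_on s U -> exists L, basis_for s U U L.
Proof.
elim: s U => [|t s IH] U Uup.
  have [[f0 Uf0]|noU] := classic (exists f, U f).
    by exists [:: f0]; split=> [x [<-|[]] //|f _]; exists f0; first left.
  by exists [::]; split=> // f Uf; case: noU; exists f.
have slice_up W : upclosed_on s (fun x => U (upd x t W)).
  by move=> f g Uf fg; apply: Uup Uf (le_on_upd (t := t) fg (leqnn W)).
pose proj f := exists v, U (upd f t v).
have proj_up : upclosed_on s proj.
  by move=> f g [v Uf] fg; exists v; apply: slice_up Uf fg.
have [Lp [LpU LpG]] := IH proj proj_up.
have [V LpV] : exists V, forall x, List.In x Lp -> U (upd x t V).
  apply: uniform_bound LpU => x v w Uv vw.
  by apply: Uup Uv (le_on_upd (t := t) (fun _ _ => leqnn _) vw).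
have high := basis_for_upd (conj LpV LpG).
have low W : exists L, basis_for (t :: s) U (fun f => U f /\ f t < W) L.
  elim: W => [|W [L LB]]; first by exists [::]; split=> // f [].
  have [LW LWB] := IH _ (slice_up W).
  exists (L ++ List.map (fun x => upd x t W) LW).
  apply: basis_for_sub (basis_for_cat LB (basis_for_upd LWB)) => f [Uf].
  rewrite ltnS leq_eqVlt => /orP[/eqP fW|fW]; [right|by left].
  by rewrite -fW; split=> //; apply: Uup Uf _; apply: le_on_upd_self.
have [L LB] := low V.
exists (List.map (fun x => upd x t V) Lp ++ L).
apply: basis_for_sub (basis_for_cat high LB) => f Uf.
have [Vf|fV] := leqP V (f t); [left|by right].
by split=> //; exists (f t); apply: Uup Uf _; apply: le_on_upd_self.
Qed.

Lemma dickson_bounded s U : upclosed_on s U ->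
  exists M, forall f, U f ->
    exists x, [/\ U x, le_on s x f & forall t, t \in s -> x t <= M].
Proof.
move=> Uup; have [L [LU LG]] := dickson Uup.
have [M LM] : exists M, forall x, List.In x L -> forall t, t \in s -> x t <= M.
  apply: uniform_bound => [x v w xv vw t st|x _].
    exact: leq_trans (xv t st) vw.
  by exists (\max_(t <- s) x t) => t st; apply: leq_bigmax_seq.
by exists M => f /LG[x Lx xf]; exists x; split; [apply: LU|..|apply: LM].
Qed.

End Dickson.

Lemma bounded_funs (T : finType) M : exists s : seq (T -> nat),
  forall f, (forall t, f t <= M) -> exists2 g, List.In g s & g =1 f.
Proof.
exists (List.map (fun (g : {ffun T -> 'I_M.+1}) t => val (g t))
                 (enum {ffun T -> 'I_M.+1})).
move=> f fM; pose g := [ffun t => inord (f t) : 'I_M.+1].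
exists (fun t => val (g t)).
  by apply: List.in_map; apply: In_of_mem; rewrite mem_enum.
by move=> t; rewrite ffunE /= inordK // ltnS.
Qed.

Section Truncation.

Context {disp : Order.disp_t} {P : finPOrderType disp}.
Implicit Types (phi psi : P -> nat).

Lemma eq_ascent phi psi : phi =1 psi -> ascent phi =i ascent psi.
Proof.
move=> e [p i]; rewrite /ascent /in_mem /= e.
by congr andb; apply: eq_forallb => q; rewrite e.
Qed.

Lemma isotone_minn phi M : isotone phi -> isotone (fun p => minn (phi p) M).
Proof.
move=> phi_iso p q pq; rewrite leq_min geq_minr andbT.
exact: leq_trans (geq_minl _ _) (phi_iso _ _ pq).
Qed.

Lemma ascent_minn_sub phi M :
  {subset ascent (fun p => minn (phi p) M) <= ascent phi}.
Proof.
move=> [p i]; rewrite /ascent /in_mem /= leq_min.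
move=> /andP[/forallP lt_i /andP[ip iM]].
rewrite ip andbT; apply/forallP => q; apply/implyP => qp.
by have := implyP (lt_i q) qp; rewrite geq_min (leqNgt M) iM orbF.
Qed.

End Truncation.

Theorem lemma1p5 (disp : Order.disp_t) (P : finPOrderType disp)
  (F : (P -> nat) -> Prop) :
  hom_filter F ->
  exists s : seq (P -> nat),
    forall A : pred (P * nat), min_ascent F A ->
      exists phi, List.In phi s /\ A =i ascent phi.
Proof.
move=> [F_iso F_up].
pose U f := exists2 phi, F phi & forall p, phi p <= f p.
have U_up : upclosed_on (enum P) U.
  move=> f g [phi Fphi phif] fg; exists phi => // p.
  by apply: leq_trans (phif p) (fg p _); rewrite mem_enum.
have [M UM] := dickson_bounded U_up.
have [s sM] := bounded_funs P M.
exists s => A [[phi Fphi Aphi] A_min].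
have Uphi : U phi by exists phi.
have [x [[phi0 Fphi0 phi0x] xphi xM]] := UM _ Uphi.
pose psi p := minn (phi p) M.
have Fpsi : F psi.
  apply: F_up Fphi0 (isotone_minn M (F_iso _ Fphi)) _ => p.
  have Pp : p \in enum P by rewrite mem_enum.
  by rewrite leq_min (leq_trans (phi0x p) (xphi p Pp)) (leq_trans (phi0x p) (xM p Pp)).
have Apsi : A =i ascent psi.
  have psiA : {subset ascent psi <= A} by move=> y /ascent_minn_sub; rewrite Aphi.
  by move=> y; apply/idP/idP; [apply: A_min|apply: psiA].
have [g sg gpsi] := sM psi (fun p => geq_minr _ _).
by exists g; split=> // y; rewrite Apsi (eq_ascent gpsi).
Qed.
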